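(* Every convex body $Q\subset\mathbb R^d$ containing the origin admits a linear projection $P$ (a linear idempotent map) onto a one-dimensional linear subspace such that $P(Q)\subseteq Q$.
   Context: A convex body is a compact convex set with non-empty interior. *)

From HB Require Import structures.
From mathcomp Require Import all_boot all_order all_algebra.
From mathcomp Require Import all_classical all_reals all_analysis.

From HB Require Import structures.
From mathcomp Require Import all_boot all_order all_algebra.
From mathcomp Require Import all_classical all_reals all_analysis.
From mathcomp Require Import ring lra.
Import Order.TTheory GRing.Theory Num.Theory numFieldTopology.Exports numFieldNormedType.Exports.
Local Open Scope classical_set_scope.
Local Open Scope ring_scope.

(* Let h n = max_{y in Q} <n, y> be the support function of Q.  Given u and n with
   <u, n> = 1, the rank-one projection x |-> <x, n> u maps Q into Q whenever Q lies in a
   slab {lo <= <., n> <= hi} whose boundary hyperplanes meet the line R u in points lo u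
   and hi u of Q.
   If 0 is on the boundary of Q, some g <> 0 has h g <= 0, and n = -g with the chord from
   0 to a maximiser of <-g, .> works.  Otherwise h > 0 away from 0, so by compactness the
   ratio h n / h (-n) attains its maximum r at some n0.  Then h <= r h (-.), which by
   separation means -Q/r is contained in Q, and the chord from -a/r to a, for a maximiser
   a of <n0, .>, works. *)

Set Implicit Arguments.
Unset Strict Implicit.
Unset Printing Implicit Defensive.

Section Dot.
Variables (R : realFieldType) (d : nat).
Implicit Types (x y z n u : 'rV[R]_d) (a : R).

Definition dot x y : R := \sum_i x ord0 i * y ord0 i.

Lemma dotC x y : dot x y = dot y x.
Proof. by apply: eq_bigr => i _; rewrite mulrC. Qed.

Lemma dotDl x y z : dot (x + y) z = dot x z + dot y z.
Proof. by rewrite /dot -big_split; apply: eq_bigr => i _; rewrite !mxE mulrDl. Qed.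

Lemma dotZl a x y : dot (a *: x) y = a * dot x y.
Proof. by rewrite /dot mulr_sumr; apply: eq_bigr => i _; rewrite !mxE mulrA. Qed.

Lemma dotNl x y : dot (- x) y = - dot x y.
Proof. by rewrite -scaleN1r dotZl mulN1r. Qed.

Lemma dotBl x y z : dot (x - y) z = dot x z - dot y z.
Proof. by rewrite dotDl dotNl. Qed.

Lemma dotDr x y z : dot x (y + z) = dot x y + dot x z.
Proof. by rewrite dotC dotDl !(dotC x). Qed.

Lemma dotZr a x y : dot x (a *: y) = a * dot x y.
Proof. by rewrite dotC dotZl dotC. Qed.

Lemma dotNr x y : dot x (- y) = - dot x y.
Proof. by rewrite dotC dotNl dotC. Qed.

Lemma dotBr x y z : dot x (y - z) = dot x y - dot x z.
Proof. by rewrite dotDr dotNr. Qed.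

Lemma dot0l x : dot 0 x = 0.
Proof. by rewrite -(scale0r 0) dotZl mul0r. Qed.

Lemma dotxx_ge0 x : 0 <= dot x x.
Proof. by apply: sumr_ge0 => i _; rewrite -expr2 sqr_ge0. Qed.

Lemma dotxx_gt0 x : x != 0 -> 0 < dot x x.
Proof.
move=> x0; rewrite lt_def dotxx_ge0 andbT; apply: contraNneq x0 => xx0.
apply/eqP/rowP => i; apply/eqP; rewrite mxE -sqrf_eq0 expr2; apply/eqP.
by apply: (psumr_eq0P _ xx0) => // j _; rewrite -expr2 sqr_ge0.
Qed.

Lemma norm_coord_le x i : `|x ord0 i| <= `|x|.
Proof.
rewrite [leRHS]/Num.Def.normr /= mx_normrE.
by apply/bigmax_geP; right; exists (ord0, i).
Qed.

Lemma norm_dot_le x y : `|dot x y| <= d%:R * (`|x| * `|y|).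
Proof.
rewrite /dot (le_trans (ler_norm_sum _ _ _))// -[X in X%:R * _](card_ord d).
rewrite -sumr_const mulr_suml; apply: ler_sum => i _.
by rewrite mul1r normrM ler_pM ?norm_coord_le.
Qed.

Lemma continuous_dot (T : topologicalType) (f g : T -> 'rV[R]_d) :
  continuous f -> continuous g -> continuous (fun t => dot (f t) (g t)).
Proof.
move=> cf cg; apply: (continuous_big add_continuous) => i _ t.
have coord_i := @coord_continuous R 1 d ord0 i.
by apply: cvgM; [move: (cf t) | move: (cg t)] => ct; exact: (continuous_comp ct (coord_i _)).
Qed.

Lemma mul_rank_one_mx x n u : x *m (n^T *m u) = dot x n *: u.
Proof.
rewrite mulmxA (mx11_scalar (x *m n^T)) mul_scalar_mx; congr (_ *: _).
by rewrite !mxE; apply: eq_bigr => i _; rewrite mxE.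
Qed.

Lemma rank_one_mx_idem n u : dot u n = 1 -> (n^T *m u) *m (n^T *m u) = n^T *m u.
Proof. by move=> un1; rewrite -mulmxA mul_rank_one_mx un1 scale1r. Qed.

Lemma rank_one_mx_rank n u : dot u n = 1 -> \rank (n^T *m u) = 1%N.
Proof.
move=> un1; apply/eqP; rewrite eqn_leq (leq_trans (mxrankM_maxr _ _)) ?rank_leq_row //.
rewrite lt0n mxrank_eq0; apply: contra_neq (@oner_neq0 R) => P0.
by rewrite -un1 -(scale1r u) -un1 -mul_rank_one_mx P0 mulmx0 dot0l.
Qed.

End Dot.

Lemma lipschitz_continuous (K : realFieldType) (V W : normedModType K) (k : K)
    (f : V -> W) :
  (forall x y, `|f x - f y| <= k * `|x - y|) -> continuous f.
Proof.
move=> fk x; apply/(@cvgrPdist_lt _ _ _ _ (nbhs_filter x)) => e e0.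
have k1 : 0 < `|k| + 1 by rewrite ltr_wpDl.
have kk : k <= `|k| + 1 by rewrite (le_trans (ler_norm k)) ?lerDl.
apply/nbhs_normP; exists (e / (`|k| + 1)); first by rewrite /= divr_gt0.
move=> y /= xy; apply: le_lt_trans (fk x y) _.
apply: le_lt_trans (ler_wpM2r (normr_ge0 _) kk) _.
by rewrite mulrC -ltr_pdivlMr.
Qed.

Section ConvexSegment.
Variables (R : realFieldType) (E : lmodType R) (Q : set (convex_lmodType E)).
Hypothesis Qconv : convex_set Q.

Lemma convex_setP (x y : E) t : Q x -> Q y -> 0 <= t <= 1 -> Q (t *: x + (1 - t) *: y).
Proof.
move=> Qx Qy /andP[t0 t1].
by have := @Qconv _ _ (Itv01 t0 t1) (mem_set Qx) (mem_set Qy); rewrite inE.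
Qed.

Lemma convex_scale_segment (u : E) lo hi s :
  Q (lo *: u) -> Q (hi *: u) -> lo <= s <= hi -> Q (s *: u).
Proof.
move=> Qlo Qhi /andP[los shi]; have [lohi|hilo] := eqVneq lo hi.
  by have -> : s = lo by apply/eqP; rewrite eq_le los lohi shi.
have gap : 0 < hi - lo by rewrite subr_gt0 lt_neqAle hilo (le_trans los).
pose t := (s - lo) / (hi - lo).
have -> : s *: u = t *: (hi *: u) + (1 - t) *: (lo *: u).
  by rewrite !scalerA -scalerDl; congr (_ *: _); rewrite /t; field; rewrite gt_eqF.
apply: convex_setP => //; rewrite divr_ge0 ?subr_ge0 ?(le_trans los shi) //=.
by rewrite ler_pdivrMr // mul1r lerD2r.
Qed.

End ConvexSegment.

Lemma norm_le_bounded_set (K : realFieldType) (V : normedModType K) (A : set V) (B : K) :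
  (forall y, A y -> `|y| <= B) -> bounded_set A.
Proof.
move=> AB; exists B; split; first by rewrite num_real.
by move=> M BM y Ay; exact: le_trans (AB y Ay) (ltW BM).
Qed.

Section SupportFunction.
Variables (R : realType) (d : nat) (Q : set 'rV[R]_d).
Implicit Types (n g y : 'rV[R]_d).

Definition support_fun n : R := sup [set dot n y | y in Q].
Local Notation h := support_fun.

Lemma support_fun_eq n v :
  (exists2 a, Q a & dot n a = v) -> (forall y, Q y -> dot n y <= v) -> h n = v.
Proof.
move=> [a Qa av] ub; apply/eqP; rewrite eq_le; apply/andP; split.
  by apply: ge_sup => [|_ [y Qy <-]]; [exists (dot n a), a | exact: ub].
by apply: ub_le_sup; [exists v => _ [y Qy <-]; exact: ub | exists a].
Qed.

Hypotheses (Qcpt : compact Q) (Qn0 : Q !=set0).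

Lemma support_fun_max n : exists2 a, Q a & forall y, Q y -> dot n y <= dot n a.
Proof.
have dot_n : continuous (dot n) := continuous_dot (@cst_continuous _ _ n) (fun y => cvg_id).
have [a Qa amax] := compact_EVT_max Qn0 Qcpt (continuous_subspaceT dot_n).
by exists a => [|y Qy]; [exact: set_mem | exact/amax/mem_set].
Qed.

Lemma support_fun_attained n : exists2 a, Q a & dot n a = h n.
Proof.
have [a Qa amax] := support_fun_max n.
by exists a => //; apply/esym/support_fun_eq => //; exists a.
Qed.

Lemma support_fun_ub n y : Q y -> dot n y <= h n.
Proof.
have [a Qa amax] := support_fun_max n.
by move=> Qy; rewrite (@support_fun_eq n (dot n a)); [exact: amax | exists a | exact: amax].
Qed.

Lemma support_funZ l n : 0 <= l -> h (l *: n) = l * h n.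
Proof.
move=> l0; apply: support_fun_eq => [|y Qy].
  by have [a Qa an] := support_fun_attained n; exists a => //; rewrite dotZl an.
by rewrite dotZl ler_wpM2l // support_fun_ub.
Qed.

Lemma support_fun0 : h 0 = 0.
Proof.
have [a Qa] := Qn0; apply: support_fun_eq => [|y _]; last by rewrite dot0l.
by exists a; rewrite ?dot0l.
Qed.

Lemma continuous_support_fun : continuous h.
Proof.
have /ex_strict_bound_gt0[B _ QB] : bounded_set Q by exact: compact_bounded.
have shift n n' : h n <= h n' + d%:R * B * `|n - n'|.
  have [a Qa <-] := support_fun_attained n.
  rewrite -{1}(subrK n' n) dotDl addrC lerD ?support_fun_ub //.
  rewrite (le_trans (ler_norm _)) // (le_trans (norm_dot_le _ _)) //.
  by rewrite -mulrA ler_wpM2l // mulrC ler_wpM2r // ltW // QB.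
apply: (@lipschitz_continuous _ _ _ (d%:R * B)) => n n'.
have := shift n n'; have := shift n' n; rewrite distrC ler_norml; lra.
Qed.

Lemma support_fun_gt_interior c g : interior Q c -> g != 0 -> dot g c < h g.
Proof.
move=> /nbhs_normP[e /= e_gt0 ballQ] g0.
have g_gt0 : 0 < `|g| by rewrite normr_gt0.
pose t := e / (2 * `|g|).
have t_gt0 : 0 < t by rewrite divr_gt0 ?mulr_gt0.
have Qct : Q (c + t *: g).
  apply: ballQ; rewrite /= opprD addrA subrr add0r normrN normrZ gtr0_norm //.
  rewrite /t invfM mulrA mulfVK ?gt_eqF //.
  by rewrite gtr_pMr // invf_lt1 // ltr1n.
apply: lt_le_trans (support_fun_ub g Qct).
by rewrite dotDr dotZr ltrDl mulr_gt0 ?dotxx_gt0.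
Qed.

Lemma support_fun_coercive :
  (forall g, g != 0 -> 0 < h g) -> exists2 mu, 0 < mu & forall n, mu * `|n| <= h n.
Proof.
move=> hpos; pose S := [set n : 'rV[R]_d | `|n| = 1].
have S_normalize n : n != 0 -> S (`|n|^-1 *: n) by move=> n0; rewrite /S /= normfZV.
have at0 mu : mu * `|0 : 'rV[R]_d| <= h 0 by rewrite normr0 mulr0 support_fun0.
(* S is empty only when d = 0, where every n is 0. *)
have [[v Sv]|S0] := pselect (S !=set0); last first.
  exists 1 => // n; have [->|n0] := eqVneq n 0; first exact: at0.
  by exfalso; apply: S0; exists (`|n|^-1 *: n); exact: S_normalize.
have Scpt : compact S.
  apply: bounded_closed_compact; first by apply: (@norm_le_bounded_set _ _ _ 1) => y ->.
  change (closed (Num.norm @^-1` [set x : R | x = 1] : set 'rV[R]_d)).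
  apply: (preimage_closed (f := Num.norm : 'rV[R]_d -> R)); last exact: closed_eq.
  by move=> x _; exact: norm_continuous.
have [g Sg gmin] := compact_EVT_min (ex_intro _ v Sv) Scpt
  (continuous_subspaceT continuous_support_fun).
have g0 : g != 0 by rewrite -normr_eq0 (set_mem Sg) oner_neq0.
exists (h g) => [|n]; first exact: hpos.
have [->|n0] := eqVneq n 0; first exact: at0.
have := gmin _ (mem_set (S_normalize n n0)).
by rewrite support_funZ ?invr_ge0 // ler_pdivlMl ?normr_gt0 // mulrC.
Qed.

Lemma support_fun_ratio_max :
  (forall g, g != 0 -> 0 < h g) ->
  exists2 n0, h (- n0) <= 1 & forall n, h n <= h n0 * h (- n).
Proof.
move=> hpos; have [mu mu_gt0 coer] := support_fun_coercive hpos.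
pose N := [set n : 'rV[R]_d | h (- n) <= 1].
have N0 : N 0 by rewrite /N /= oppr0 support_fun0 ler01.
have Ncpt : compact N.
  apply: bounded_closed_compact.
    apply: (@norm_le_bounded_set _ _ _ mu^-1) => n Nn.
    by rewrite -(ler_pM2l mu_gt0) mulfV ?gt_eqF // -normrN (le_trans (coer _)).
  change (closed ((fun n => h (- n)) @^-1` [set x : R | x <= 1])).
  apply: (preimage_closed (f := fun n => h (- n))); last exact: closed_le.
  by move=> n _; apply: continuous_comp; [exact: opp_continuous | exact: continuous_support_fun].
have [n0 Nn0 n0max] := compact_EVT_max (ex_intro _ 0 N0) Ncpt
  (continuous_subspaceT continuous_support_fun).
exists n0 => [|n]; first exact: set_mem Nn0.
have [->|n_ne0] := eqVneq n 0; first by rewrite oppr0 support_fun0 mulr0.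
have hNn_gt0 : 0 < h (- n) by rewrite hpos ?oppr_eq0.
have Nn : N ((h (- n))^-1 *: n).
  by rewrite /N /= -scalerN support_funZ ?mulVf ?gt_eqF // invr_ge0 ltW.
have := n0max _ (mem_set Nn).
by rewrite support_funZ ?ler_pdivrMl 1?mulrC // invr_ge0 ltW.
Qed.

End SupportFunction.

Section Separation.
Variables (R : realType) (d : nat) (Q : set 'rV[R]_d).
Hypothesis Qconv : convex_set (Q : set (convex_lmodType 'rV[R]_d)).
Implicit Types (w p y : 'rV[R]_d).

Lemma nearest_point_obtuse w p :
  Q p -> (forall y, Q y -> dot (w - p) (w - p) <= dot (w - y) (w - y)) ->
  forall y, Q y -> dot (w - p) (y - p) <= 0.
Proof.
move=> Qp pmin y Qy; rewrite leNgt; apply/negP => del_gt0.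
set g := w - p in pmin del_gt0 *; set e := y - p in del_gt0.
set del := dot g e in del_gt0; pose D := dot e e.
have Dd_gt0 : 0 < D + del by rewrite ltr_wpDl ?dotxx_ge0.
(* t is chosen so that t D = del - t del, whereas minimality of p forces
   2 t del <= t^2 D; together they contradict del > 0. *)
pose t := del / (D + del).
have t_gt0 : 0 < t by rewrite divr_gt0.
have t01 : 0 <= t <= 1 by rewrite ltW // ler_pdivrMr // mul1r lerDr dotxx_ge0.
have tD : t * (D + del) = del by rewrite mulfVK ?gt_eqF.
have := pmin _ (convex_setP Qconv Qy Qp t01).
have -> : w - (t *: y + (1 - t) *: p) = g - t *: e.
  by rewrite /g /e scalerBl scale1r scalerBr; apply/rowP => i; rewrite !mxE; ring.
clearbody g e; rewrite !dotBl !dotBr !dotZl !dotZr (dotC e g) -/del -/D => min_t.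
have := mulr_gt0 t_gt0 del_gt0; have := mulr_gt0 t_gt0 (mulr_gt0 t_gt0 del_gt0).
nra.
Qed.

Hypotheses (Qcpt : compact Q) (Qn0 : Q !=set0).

Lemma nearest_point_exists w :
  exists2 p, Q p & forall y, Q y -> dot (w - p) (w - p) <= dot (w - y) (w - y).
Proof.
have dist_w : continuous (fun y => dot (w - y) (w - y)).
  have w_sub : continuous (fun y : 'rV[R]_d => w - y).
    by move=> y; apply: continuousB; [exact: cst_continuous | exact: cvg_id].
  exact: (continuous_dot w_sub w_sub).
have [p Qp pmin] := compact_EVT_min Qn0 Qcpt (continuous_subspaceT dist_w).
by exists p => [|y Qy]; [exact: set_mem | exact/pmin/mem_set].
Qed.

Lemma mem_of_le_support_fun w : (forall g, dot g w <= support_fun Q g) -> Q w.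
Proof.
move=> wh; apply: contrapT => Qw.
have [p Qp pmin] := nearest_point_exists w.
have g0 : w - p != 0 by apply: contraPneq Qw => /subr0_eq ->.
have [a Qa ha] := support_fun_attained Qcpt Qn0 (w - p).
have := nearest_point_obtuse Qp pmin Qa; have := wh (w - p).
rewrite -ha dotBr; have := dotxx_gt0 g0; rewrite [in X in _ < X -> _]dotBr; lra.
Qed.

End Separation.

Definition stable_line_projection (R : realFieldType) (d : nat) (Q : set 'rV[R]_d)
    (P : 'M[R]_d) :=
  P *m P = P /\ \rank P = 1%N /\ (forall x, Q x -> Q (x *m P)).

Section LineProjection.
Variables (R : realType) (d : nat) (Q : set 'rV[R]_d).
Hypothesis Qconv : convex_set (Q : set (convex_lmodType 'rV[R]_d)).
Local Notation h := (support_fun Q).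

Lemma chord_projection n u lo hi :
  dot u n = 1 -> Q (lo *: u) -> Q (hi *: u) ->
  (forall x, Q x -> lo <= dot x n <= hi) ->
  exists P, stable_line_projection Q P.
Proof.
move=> un1 Qlo Qhi slab; exists (n^T *m u); split; first exact: rank_one_mx_idem.
split; first exact: rank_one_mx_rank.
by move=> x Qx; rewrite mul_rank_one_mx; apply: (convex_scale_segment Qconv Qlo Qhi); exact: slab.
Qed.

Hypotheses (Qcpt : compact Q) (Q0 : Q 0).
Let Qn0 : Q !=set0. Proof. by exists 0. Qed.

Lemma line_projection_of_support_le0 g :
  interior Q !=set0 -> g != 0 -> h g <= 0 -> exists P, stable_line_projection Q P.
Proof.
move=> [c Qc] g0 hg.
have hNg_gt0 : 0 < h (- g).
  have Ng0 : - g != 0 by rewrite oppr_eq0.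
  have := support_fun_gt_interior Qcpt Qn0 Qc Ng0.
  have := support_fun_ub Qcpt Qn0 g (interior_subset Qc); rewrite dotNl; lra.
have [a Qa ha] := support_fun_attained Qcpt Qn0 (- g).
apply: (@chord_projection (- g) ((h (- g))^-1 *: a) 0 (h (- g))).
- by rewrite dotZl dotC ha mulVf ?gt_eqF.
- by rewrite scale0r.
- by rewrite scalerA mulfV ?gt_eqF // scale1r.
- move=> x Qx; rewrite dotC support_fun_ub //=.
  by have := support_fun_ub Qcpt Qn0 g Qx; rewrite dotNl; lra.
Qed.

Lemma line_projection_of_support_gt0 :
  (0 < d)%N -> (forall g, g != 0 -> 0 < h g) -> exists P, stable_line_projection Q P.
Proof.
move=> d_gt0 hpos; have [n0 hNn0 n0max] := support_fun_ratio_max Qcpt Qn0 hpos.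
set r := h n0 in n0max.
have r_gt0 : 0 < r.
  pose v : 'rV[R]_d := const_mx 1.
  have v0 : v != 0 by apply/eqP => /rowP/(_ (Ordinal d_gt0)); rewrite !mxE; exact/eqP/oner_neq0.
  have := n0max v; have := hpos v v0; have := hpos (- v); rewrite oppr_eq0 => /(_ v0); nra.
have [a Qa ha] := support_fun_attained Qcpt Qn0 n0.
have Q_Na : Q (- r^-1 *: a).
  apply: (mem_of_le_support_fun Qconv Qcpt Qn0) => g.
  have := support_fun_ub Qcpt Qn0 (- g) Qa; have := n0max (- g); rewrite opprK.
  rewrite dotZr dotNl mulNr -mulrN ler_pdivrMl //; lra.
apply: (@chord_projection n0 (r^-1 *: a) (-1) r).
- by rewrite dotZl dotC ha mulVf ?gt_eqF.
- by rewrite scalerA mulN1r.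
- by rewrite scalerA mulfV ?gt_eqF // scale1r.
- move=> x Qx; rewrite dotC support_fun_ub // andbT.
  by have := support_fun_ub Qcpt Qn0 (- n0) Qx; rewrite dotNl; lra.
Qed.

End LineProjection.

Theorem proposition2p1 (R : realType) (d : nat) (Q : set 'rV[R]_d) :
  (0 < d)%N ->
  convex_set (Q : set (convex_lmodType 'rV[R]_d)) ->
  compact Q ->
  interior Q !=set0 ->
  Q 0 ->
  exists P : 'M[R]_d,
    P *m P = P /\ \rank P = 1%N /\ (forall x, Q x -> Q (x *m P)).
Proof.
move=> d_gt0 Qconv Qcpt Qint Q0.
have [[g [g0 hg]]|hpos] := pselect (exists g, g != 0 /\ support_fun Q g <= 0).
  exact: line_projection_of_support_le0 Qint g0 hg.
apply: line_projection_of_support_gt0 => // g g0.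
by rewrite ltNge; apply/negP => hg; apply: hpos; exists g.
Qed.
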